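(* Assume $b_1<n^*$ and $b_2<m^*$, and let $\epsilon=b_1b_2\bigl(\frac{1}{\max\{b_1,m^*\}}-\frac{1}{n^*}\bigr)$. For every minimum set cover $S^{\min}$ (a set cover of size $n^*$) and every maximum set packing $T^{\max}$ (a set packing of size $m^*$): (i.a) $(\sigma^1(S^{\min},b_1),\sigma^2(T^{\max},b_2))$ is an $\epsilon$-Nash equilibrium of $\Gamma(b_1,b_2)$; (i.b) for every Nash equilibrium $(\sigma^{1*},\sigma^{2*})$ of $\Gamma(b_1,b_2)$ and each $j\in\{1,2\}$, $|U_j(\sigma^1(S^{\min},b_1),\sigma^2(T^{\max},b_2))-U_j(\sigma^{1*},\sigma^{2*})|\le\epsilon$; (ii) $\min_{\sigma^2} r(\sigma^1(S^{\min},b_1),\sigma^2)=\frac{b_1}{n^*}$, the minimum being over all $\sigma^2\in\Delta(\mathcal A_2)$ supported on nonempty attack plans, and for every Nash equilibrium $(\sigma^{1*},\sigma^{2*})$ of $\Gamma(b_1,b_2)$, $\frac{b_1}{n^*}\ge\frac{\max\{b_1,m^*\}}{n^*}\,r(\sigma^{1*},\sigma^{2*})$.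
   Context: Detection model: finite nonempty sets $\mathcal V$, $\mathcal E$, monitoring sets $\mathcal C_i\subseteq\mathcal E$ ($i\in\mathcal V$) with every $e\in\mathcal E$ in some $\mathcal C_i$; $\mathcal C_S=\bigcup_{i\in S}\mathcal C_i$; $F(S,T)=|\mathcal C_S\cap T|$. Set cover: $S\subseteq\mathcal V$ with $\mathcal C_S=\mathcal E$; $n^*$ = minimum size of a set cover. Set packing: $T\subseteq\mathcal E$ with $|\mathcal C_i\cap T|\le1$ for all $i$; $m^*$ = maximum size of a set packing. Game $\Gamma(b_1,b_2)$ ($b_1,b_2$ positive integers): $\mathcal A_1=\{S\subseteq\mathcal V:|S|\le b_1\}$, $\mathcal A_2=\{T\subseteq\mathcal E:|T|\le b_2\}$; mixed strategies $\sigma^1\in\Delta(\mathcal A_1)$, $\sigma^2\in\Delta(\mathcal A_2)$ (independent); payoffs $U_1=\mathbb E[F(S,T)]$, $U_2=\mathbb E[|T|]-\mathbb E[F(S,T)]$. Nash equilibrium as usual; for $\epsilon\ge0$ an $\epsilon$-Nash equilibrium is a profile $(\sigma^{1\prime},\sigma^{2\prime})$ with $U_1(\sigma^{1\prime},\sigma^{2\prime})\ge U_1(\sigma^1,\sigma^{2\prime})-\epsilon$ for all $\sigma^1$ and $U_2(\sigma^{1\prime},\sigma^{2\prime})\ge U_2(\sigma^{1\prime},\sigma^2)-\epsilon$ for all $\sigma^2$. Expected detection rate: $r(\sigma)=\mathbb E[F(S,T)/|T|]$ for profiles whose attack strategy is supported on nonempty sets. Cyclic strategies: for $S=\{i_1,\dots,i_n\}$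 (fixed enumeration) with $n\ge b_1$, $S^k=\{i_k,\dots,i_{k+b_1-1}\}$ with indices cyclic mod $n$, $k=1,\dots,n$, and $\sigma^1(S,b_1)$ puts probability $1/n$ on each $S^k$; for $T=\{e_1,\dots,e_m\}$ with $m\ge b_2$, $T^l=\{e_l,\dots,e_{l+b_2-1}\}$ cyclically and $\sigma^2(T,b_2)$ puts probability $1/m$ on each $T^l$. *)

From HB Require Import structures.
From mathcomp Require Import all_boot all_order all_algebra.
Set Implicit Arguments. Unset Strict Implicit. Unset Printing Implicit Defensive.
Import Order.TTheory GRing.Theory Num.Theory.
Local Open Scope ring_scope.

Section Model.
Variables (V E : finType) (C : V -> {set E}).

Definition CS (S : {set V}) : {set E} := \bigcup_(i in S) C i.

Definition F (S : {set V}) (T : {set E}) : nat := #|CS S :&: T|.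

Definition is_cover (S : {set V}) : Prop := CS S = [set: E].
Definition coverb (S : {set V}) : bool := CS S == [set: E].

Definition is_packing (T : {set E}) : Prop := forall i : V, (#|C i :&: T| <= 1)%N.
Definition packingb (T : {set E}) : bool := [forall i : V, (#|C i :&: T| <= 1)%N].

(* n^* : minimum size of a set cover (meaningful when [set: V] is a cover) *)
Definition nstar : nat := #|[arg min_(S < [set: V] | coverb S) #|S| ]|.
(* m^* : maximum size of a set packing (set0 is always a packing) *)
Definition mstar : nat := #|[arg max_(T > set0 | packingb T) #|T| ]|.
End Model.

Section Game.
Variable R : realFieldType.

Definition mixed (A : finType) (b : nat) (s : {set A} -> R) : Prop :=
  [/\ forall X, 0 <= s X, \sum_(X : {set A}) s X = 1
    & forall X, s X != 0 -> (#|X| <= b)%N].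

Variables (V E : finType) (C : V -> {set E}).

Definition U1 (s1 : {set V} -> R) (s2 : {set E} -> R) : R :=
  \sum_(S : {set V}) \sum_(T : {set E}) s1 S * s2 T * (F C S T)%:R.

Definition U2 (s1 : {set V} -> R) (s2 : {set E} -> R) : R :=
  \sum_(S : {set V}) \sum_(T : {set E}) s1 S * s2 T * ((#|T|)%:R - (F C S T)%:R).

Definition epsNash (b1 b2 : nat) (eps : R) (s1 : {set V} -> R) (s2 : {set E} -> R) : Prop :=
  [/\ mixed b1 s1, mixed b2 s2,
      (forall s1', mixed b1 s1' -> U1 s1' s2 <= U1 s1 s2 + eps)
    & (forall s2', mixed b2 s2' -> U2 s1 s2' <= U2 s1 s2 + eps)].

Definition Nash (b1 b2 : nat) := epsNash b1 b2 0.

Definition rate (s1 : {set V} -> R) (s2 : {set E} -> R) : R :=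
  \sum_(S : {set V}) \sum_(T : {set E}) s1 S * s2 T * ((F C S T)%:R / (#|T|)%:R).

Definition nonempty_support (s2 : {set E} -> R) : Prop :=
  forall T, s2 T != 0 -> T != set0.
End Game.

(* Cyclic strategy: for an enumeration s = [x_0; ...; x_{n-1}] of a set,
   the k-th window is {x_k, ..., x_{k+b-1}} (indices mod n), k = 0..n-1;
   the strategy gives probability 1/n to each window (summing if windows coincide). *)
Definition window (A : finType) (s : seq A) (b k : nat) : {set A} :=
  [set x in take b (rot k s)].

Definition cyc (R : realFieldType) (A : finType) (s : seq A) (b : nat) (X : {set A}) : R :=
  (\sum_(k < size s) (X == window s b k : nat))%N%:R / (size s)%:R.

From HB Require Import structures.
From mathcomp Require Import all_boot all_order all_algebra.
From mathcomp Require Import zify ring lra.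
Import Order.TTheory GRing.Theory Num.Theory.
Set Implicit Arguments. Unset Strict Implicit. Unset Printing Implicit Defensive.

(* Write [n = nstar C], [m = mstar C], [lo = b1 b2 / n] and [hi = b1 b2 / max(b1, m)].
   Each vertex of the minimum cover [sS] lies in exactly [b1] of its [n] windows, so the
   cyclic defence detects every target with probability at least [b1 / n], with equality
   at a target private to one vertex; the cyclic attack puts mass [b2 / m] on each target
   of the packing [tT], and [b1] vertices monitor at most [min(b1, m)] of them.  Since the
   attacker's payoff is [E|T| - U1] with [E|T| <= b2], these two facts confine the payoffs
   of the cyclic profile and, through the deviations to it, those of every Nash equilibrium
   to [U1 \in [lo, hi]] and [U2 \in [b2 - hi, b2 - lo]], whence [eps = hi - lo].  The
   only delicate bound is [lo <= U1] when the Nash attacker sometimes plays fewer than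
   [b2] targets; there an exchange argument on best responses gives [U1 >= b1]. *)

Lemma sum_ord_lt n b : (\sum_(k < n) (k < b) = minn b n)%N.
Proof.
elim: n => [|n IH]; first by rewrite big_ord0; lia.
by rewrite big_ord_recr /= IH; case: ltnP; lia.
Qed.

Section Windows.
Variable A : finType.
Implicit Types (s : seq A) (b k : nat).

Lemma window_sub s b k : window s b k \subset [set x in s].
Proof. by apply/subsetP => x; rewrite !inE => /mem_take; rewrite mem_rot. Qed.

Lemma card_window_le s b k : (#|window s b k| <= b)%N.
Proof.
by rewrite cardsE (leq_trans (card_size _)) // size_take_min geq_minl.
Qed.

Lemma card_window s b k : uniq s -> (b <= size s)%N -> #|window s b k| = b.
Proof.
move=> us bs; rewrite cardsE (card_uniqP (take_uniq b _)) ?rot_uniq //.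
by rewrite size_takel // size_rot.
Qed.

Definition rot_shift (n i k : nat) : nat := if (k <= i)%N then (i - k)%N else (i + n - k)%N.

Lemma index_rot s k x : uniq s -> x \in s -> (k < size s)%N ->
  index x (rot k s) = rot_shift (size s) (index x s) k.
Proof.
move=> us xs ks; set n := size s; set i := index x s.
have iltn : (i < n)%N by rewrite index_mem.
have nth_rotE : nth x (rot k s) (rot_shift n i k) = x.
  rewrite nth_cat size_drop -/n /rot_shift.
  have [ki|ik] := leqP k i.
    by rewrite ifT ?nth_drop ?subnKC ?nth_index //; lia.
  rewrite ifF ?nth_take; [|lia|lia].
  have -> : (i + n - k - (n - k) = i)%N by lia.
  exact: nth_index.
rewrite -{1}nth_rotE index_uniq ?rot_uniq // size_rot -/n /rot_shift.
by case: ifP; lia.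
Qed.

Lemma count_window s b x : uniq s -> x \in s -> (b <= size s)%N ->
  (\sum_(k < size s) (x \in window s b k) = b)%N.
Proof.
move=> us xs bs; set n := size s; set i := index x s.
have iltn : (i < n)%N by rewrite index_mem.
have shift_lt (k : 'I_n) : (rot_shift n i k < n)%N by rewrite /rot_shift; case: ifP; lia.
pose shift (k : 'I_n) : 'I_n := Ordinal (shift_lt k).
have shift_inj : injective shift.
  move=> k1 k2 /(congr1 val); rewrite /= /rot_shift => eq12; apply: ord_inj.
  have := ltn_ord k1; have := ltn_ord k2; move: eq12; case: ifP; case: ifP; lia.
rewrite (eq_bigr (fun k : 'I_n => nat_of_bool (shift k < b)%N)); last first.
  by move=> k _; rewrite inE in_take ?mem_rot // index_rot.
rewrite -(reindex_inj (P := xpredT) (F := fun k : 'I_n => nat_of_bool (k < b)%N) shift_inj).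
by rewrite sum_ord_lt; lia.
Qed.
End Windows.

Section Coverage.
Variables (V E : finType) (C : V -> {set E}).

Lemma CSP (S : {set V}) e : reflect (exists2 i, i \in S & e \in C i) (e \in CS C S).
Proof. exact: (iffP bigcupP) => -[i Si eCi]; exists i. Qed.

Lemma card_CS_packing (P : {set E}) (S : {set V}) :
  is_packing C P -> (#|CS C S :&: P| <= #|S|)%N.
Proof.
move=> packP; have [->|[i0 _]] := set_0Vmem S.
  by rewrite /CS big_set0 set0I cards0.
pose owner e := odflt i0 [pick i in S | e \in C i].
have ownerP e : e \in CS C S -> (owner e \in S) && (e \in C (owner e)).
  case/CSP=> i Si eCi; rewrite /owner; case: pickP => [j /andP[-> ->] //|].
  by move/(_ i); rewrite Si eCi.
rewrite -(card_in_imset (f := owner)); last first.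
  move=> e1 e2; rewrite !inE => /andP[c1 p1] /andP[c2 p2] same_owner.
  have /andP[_ e1C] := ownerP _ c1; have /andP[_ e2C] := ownerP _ c2.
  have /card_le1_eqP := packP (owner e1); apply; rewrite inE ?p1 ?p2 ?andbT //.
  by rewrite same_owner.
apply: subset_leq_card; apply/subsetP => y /imsetP[e]; rewrite inE => /andP[eS _] ->.
by case/andP: (ownerP _ eS).
Qed.

Lemma card_packing_le_cover (P : {set E}) (S : {set V}) :
  is_packing C P -> is_cover C S -> (#|P| <= #|S|)%N.
Proof. by move=> packP covS; rewrite -[P]setTI -covS card_CS_packing. Qed.

Lemma CS_subset (S1 S2 : {set V}) : S1 \subset S2 -> CS C S1 \subset CS C S2.
Proof.
by move=> S12; apply/subsetP => e /CSP[i /(subsetP S12) S2i eCi]; apply/CSP; exists i.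
Qed.

Hypothesis coverable : forall e : E, exists i : V, e \in C i.

Lemma nstar_le_cover (S : {set V}) : coverb C S -> (nstar C <= #|S|)%N.
Proof.
have covT : coverb C [set: V].
  apply/eqP/setP => e; rewrite inE; apply/CSP.
  by have [i eCi] := coverable e; exists i.
by move=> covS; rewrite /nstar; case: arg_minnP => // S0 _ /(_ S covS).
Qed.

Lemma min_cover_private (S : {set V}) i :
  is_cover C S -> #|S| = nstar C -> i \in S ->
  exists2 e, e \in C i & forall j, j \in S -> e \in C j -> j = i.
Proof.
move=> covS cardS Si.
have [/exists_inP[e eCi /forall_inP privE]|/exists_inPn noPrivate] :=
  boolP [exists e in C i, [forall j in S, (e \in C j) ==> (j == i)]].
  by exists e => // j Sj eCj; apply/eqP/(implyP (privE j Sj)).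
have covS' : coverb C (S :\ i).
  apply/eqP/setP => e; rewrite inE.
  have /CSP[j Sj eCj] : e \in CS C S by rewrite covS inE.
  have [ji|ji] := eqVneq j i; last by apply/CSP; exists j; rewrite // !inE ji.
  subst j; have /forall_inPn[k Sk] := noPrivate e eCj.
  by rewrite negb_imply => /andP[eCk ki]; apply/CSP; exists k; rewrite // !inE ki.
have := nstar_le_cover covS'; rewrite -cardS (cardsD1 i S) Si; lia.
Qed.

End Coverage.

Local Open Scope ring_scope.

Section SetSums.
Variables (R : realFieldType) (A : finType).

Lemma sum_mul_indicator (X : {set A}) (f : A -> R) :
  \sum_x f x * (x \in X)%:R = \sum_(x in X) f x.
Proof.
rewrite [RHS]big_mkcond; apply: eq_bigr => x _.
by case: (x \in X); rewrite ?mulr1 ?mulr0.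
Qed.

Lemma card_sumR (X : {set A}) : #|X|%:R = \sum_(x in X) 1 :> R.
Proof. by rewrite -sum1_card natr_sum. Qed.

Lemma natr_card_setI (X Y : {set A}) : #|X :&: Y|%:R = \sum_(x in Y) (x \in X)%:R :> R.
Proof.
rewrite card_sumR -!sum_mul_indicator; apply: eq_bigr => x _.
by rewrite inE; case: (x \in X); rewrite ?mul1r ?mul0r.
Qed.

Lemma sum_subset_le (X Y : {set A}) (f : A -> R) : (forall x, 0 <= f x) ->
  X \subset Y -> \sum_(x in X) f x <= \sum_(x in Y) f x.
Proof.
move=> f_ge0 XY; rewrite [X in _ <= X](big_setID X) /= (setIidPr XY) lerDl.
by apply: sumr_ge0 => x _.
Qed.

End SetSums.

Section MixedStrategies.
Variables (R : realFieldType) (A : finType).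
Implicit Types (s f : {set A} -> R) (X Y : {set A}).

Lemma mixed_supp b s X : mixed b s -> s X != 0 -> (#|X| <= b)%N.
Proof. by case=> _ _; apply. Qed.

Lemma mixed_sum1 b s : mixed b s -> \sum_X s X = 1.
Proof. by case. Qed.

Lemma mixed_support_exists b s : mixed b s -> exists X, s X != 0.
Proof.
move=> ms; case: (pickP (fun X => s X != 0)) => [X sX|s0]; first by exists X.
have := mixed_sum1 ms; rewrite big1 => [/esym/eqP|X _]; first by rewrite oner_eq0.
by apply/eqP; rewrite -[_ == _]negbK s0.
Qed.

Lemma mixed_expect_le b s f c :
  mixed b s -> (forall X, s X != 0 -> f X <= c) -> \sum_X s X * f X <= c.
Proof.
case=> s_ge0 s_sum1 _ f_le; rewrite -[c]mul1r -s_sum1 mulr_suml; apply: ler_sum => X _.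
by have [->|sX] := eqVneq (s X) 0; rewrite ?mul0r // ler_wpM2l ?f_le.
Qed.

Lemma mixed_expect_ge b s f c :
  mixed b s -> (forall X, s X != 0 -> c <= f X) -> c <= \sum_X s X * f X.
Proof.
case=> s_ge0 s_sum1 _ f_ge; rewrite -[c]mul1r -s_sum1 mulr_suml; apply: ler_sum => X _.
by have [->|sX] := eqVneq (s X) 0; rewrite ?mul0r // ler_wpM2l ?f_ge.
Qed.

Definition pure_strategy X : {set A} -> R := fun Y => (Y == X)%:R.

Lemma expect_pure X f : \sum_Y pure_strategy X Y * f Y = f X.
Proof.
rewrite (bigD1 X) //= /pure_strategy eqxx mul1r big1 ?addr0 // => Y /negPf ->.
by rewrite mul0r.
Qed.

Lemma mixed_pure b X : (#|X| <= b)%N -> mixed b (pure_strategy X).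
Proof.
move=> Xb; split => [Y||Y]; rewrite /pure_strategy ?ler0n //.
  by under eq_bigr do rewrite -[_%:R]mulr1; rewrite expect_pure.
by rewrite pnatr_eq0 eqb0 negbK => /eqP->.
Qed.

(* Moving the mass of [X] onto [Y] is again a mixed strategy, whose expected
   payoff changes by [s X * (f Y - f X)]. *)
Lemma mixed_optimal_support b s f X Y :
  mixed b s -> (forall s', mixed b s' -> \sum_Z s' Z * f Z <= \sum_Z s Z * f Z) ->
  s X != 0 -> (#|Y| <= b)%N -> f Y <= f X.
Proof.
move=> ms; case: (ms) => s_ge0 s_sum1 s_supp s_opt sX Yb.
have [-> //|YX] := eqVneq Y X.
pose mass (Z W : {set A}) := if Z == W then s X else 0.
pose s' Z := s Z + mass Z Y - mass Z X.
have ms' : mixed b s'.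
  split => [Z||Z].
  - rewrite /s' /mass; have [->|ZX] := eqVneq Z X; first by rewrite eq_sym (negPf YX) addr0 subrr.
    by rewrite subr0 addr_ge0 //; case: ifP.
  - have mass_sum W : \sum_Z mass Z W = s X.
      by rewrite (bigD1 W) //= /mass eqxx big1 ?addr0 // => Z /negPf ->.
    by rewrite /s' sumrB big_split /= s_sum1 !mass_sum addrK.
  - rewrite /s' /mass; have [-> //|ZY] := eqVneq Z Y.
    have [-> _|ZX] := eqVneq Z X; first exact: s_supp.
    by rewrite addr0 subr0; apply: s_supp.
have mass_mul W : \sum_Z mass Z W * f Z = s X * f W.
  by rewrite (bigD1 W) //= /mass eqxx big1 ?addr0 // => Z /negPf ->; rewrite mul0r.
have := s_opt s' ms'.
rewrite /s'; under eq_bigr do rewrite mulrBl mulrDl.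
rewrite sumrB big_split /= !mass_mul -addrA gerDl subr_le0.
by rewrite ler_pM2l // lt0r sX s_ge0.
Qed.

End MixedStrategies.

Section Payoffs.
Variables (R : realFieldType) (V E : finType) (C : V -> {set E}).

Definition cover_prob (s1 : {set V} -> R) (e : E) : R := \sum_S s1 S * (e \in CS C S)%:R.
Definition attack_prob (s2 : {set E} -> R) (e : E) : R := \sum_T s2 T * (e \in T)%:R.
Definition expected_size (s2 : {set E} -> R) : R := \sum_T s2 T * #|T|%:R.

Definition pure_U1 (s2 : {set E} -> R) (S : {set V}) : R := \sum_(e in CS C S) attack_prob s2 e.
Definition detected (s1 : {set V} -> R) (T : {set E}) : R := \sum_(e in T) cover_prob s1 e.
Definition pure_U2 (s1 : {set V} -> R) (T : {set E}) : R := #|T|%:R - detected s1 T.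

Lemma natr_F (S : {set V}) (T : {set E}) : (F C S T)%:R = \sum_(e in T) (e \in CS C S)%:R :> R.
Proof. exact: natr_card_setI. Qed.

Lemma pure_U1_E (s2 : {set E} -> R) (S : {set V}) :
  pure_U1 s2 S = \sum_T s2 T * (F C S T)%:R.
Proof.
rewrite /pure_U1 -sum_mul_indicator; under eq_bigr do rewrite mulr_suml.
rewrite exchange_big; apply: eq_bigr => T _.
by rewrite natr_F -sum_mul_indicator mulr_sumr; apply: eq_bigr => e _; ring.
Qed.

Lemma detected_E (s1 : {set V} -> R) (T : {set E}) :
  detected s1 T = \sum_S s1 S * (F C S T)%:R.
Proof.
rewrite /detected exchange_big; apply: eq_bigr => S _.
by rewrite natr_F mulr_sumr.
Qed.

Lemma U1_defence (s1 : {set V} -> R) (s2 : {set E} -> R) :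
  U1 C s1 s2 = \sum_S s1 S * pure_U1 s2 S.
Proof.
apply: eq_bigr => S _; rewrite pure_U1_E mulr_sumr.
by apply: eq_bigr => T _; rewrite mulrA.
Qed.

Lemma U1_attack (s1 : {set V} -> R) (s2 : {set E} -> R) :
  U1 C s1 s2 = \sum_T s2 T * detected s1 T.
Proof.
rewrite /U1 exchange_big; apply: eq_bigr => T _; rewrite detected_E mulr_sumr.
by apply: eq_bigr => S _; rewrite mulrA [s2 T * _]mulrC.
Qed.

Lemma rate_detected (s1 : {set V} -> R) (s2 : {set E} -> R) :
  rate C s1 s2 = \sum_T s2 T * (detected s1 T / #|T|%:R).
Proof.
rewrite /rate exchange_big; apply: eq_bigr => T _.
by rewrite detected_E mulr_suml mulr_sumr; apply: eq_bigr => S _; ring.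
Qed.

Lemma U2_E (s1 : {set V} -> R) (s2 : {set E} -> R) :
  \sum_S s1 S = 1 -> U2 C s1 s2 = expected_size s2 - U1 C s1 s2.
Proof.
move=> s1_sum1; rewrite /U2 /U1 /expected_size -[X in X - _]mul1r -s1_sum1 mulr_suml -sumrB.
by apply: eq_bigr => S _; rewrite mulr_sumr -sumrB; apply: eq_bigr => T _; ring.
Qed.

Lemma U2_attack (s1 : {set V} -> R) (s2 : {set E} -> R) :
  \sum_S s1 S = 1 -> U2 C s1 s2 = \sum_T s2 T * pure_U2 s1 T.
Proof.
move=> s1_sum1; rewrite U2_E // U1_attack -sumrB.
by apply: eq_bigr => T _; rewrite mulrBr.
Qed.

Lemma pure_U2_E (s1 : {set V} -> R) (T : {set E}) :
  pure_U2 s1 T = \sum_(e in T) (1 - cover_prob s1 e).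
Proof. by rewrite /pure_U2 /detected card_sumR sumrB. Qed.

End Payoffs.

Section PayoffBounds.
Variables (R : realFieldType) (V E : finType) (C : V -> {set E}).

Lemma cover_prob_le1 b (s1 : {set V} -> R) e : mixed b s1 -> cover_prob C s1 e <= 1.
Proof.
case=> s1_ge0 s1_sum1 _; rewrite -s1_sum1; apply: ler_sum => S _.
by rewrite ler_piMr //; case: (_ \in _).
Qed.

Lemma cover_prob_lt1 b (s1 : {set V} -> R) (S : {set V}) e :
  mixed b s1 -> s1 S != 0 -> e \notin CS C S -> cover_prob C s1 e < 1.
Proof.
case=> s1_ge0 s1_sum1 _ s1S eS; rewrite -s1_sum1 /cover_prob (bigD1 S) //= (negPf eS).
rewrite [X in _ < X](bigD1 S) //= mulr0 add0r ltr_pwDl ?lt0r ?s1S ?s1_ge0 //.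
by apply: ler_sum => S' _; rewrite ler_piMr //; case: (_ \in _).
Qed.

Lemma attack_prob_ge0 b (s2 : {set E} -> R) e : mixed b s2 -> 0 <= attack_prob s2 e.
Proof. by case=> s2_ge0 _ _; apply: sumr_ge0 => T _; rewrite mulr_ge0. Qed.

Lemma expected_size_le b (s2 : {set E} -> R) : mixed b s2 -> expected_size s2 <= b%:R.
Proof.
by move=> ms2; apply: (mixed_expect_le ms2) => T /(mixed_supp ms2); rewrite ler_nat.
Qed.

Lemma Nash_defence_best b1 b2 (s1 : {set V} -> R) s2 (S Y : {set V}) :
  Nash C b1 b2 s1 s2 -> s1 S != 0 -> (#|Y| <= b1)%N -> pure_U1 C s2 Y <= pure_U1 C s2 S.
Proof.
case=> ms1 _ opt1 _; apply: (mixed_optimal_support ms1) => s1' ms1'.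
by rewrite -!U1_defence -[X in _ <= X]addr0 opt1.
Qed.

Lemma Nash_attack_best b1 b2 (s1 : {set V} -> R) s2 (T Y : {set E}) :
  Nash C b1 b2 s1 s2 -> s2 T != 0 -> (#|Y| <= b2)%N -> pure_U2 C s1 Y <= pure_U2 C s1 T.
Proof.
case=> ms1 ms2 _ opt2; apply: (mixed_optimal_support ms2) => s2' ms2'.
by rewrite -!U2_attack ?(mixed_sum1 ms1) // -[X in _ <= X]addr0 opt2.
Qed.

End PayoffBounds.

Section BestSet.
Variables (R : realFieldType) (A : finType) (w : A -> R) (b : nat) (T : {set A}).
Hypothesis T_size : (#|T| <= b)%N.
Hypothesis T_best : forall Y : {set A}, (#|Y| <= b)%N -> \sum_(x in Y) w x <= \sum_(x in T) w x.

Lemma best_set_add a : a \notin T -> (#|T| < b)%N -> w a <= 0.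
Proof.
by move=> aT Tb; have := @T_best (a |: T); rewrite cardsU1 aT big_setU1 //= gerDr; apply.
Qed.

Lemma best_set_swap a g : a \notin T -> g \in T -> w a <= w g.
Proof.
move=> aT gT; have aTg : a \notin T :\ g by rewrite inE (negPf aT) andbF.
have := @T_best (a |: (T :\ g)).
rewrite cardsU1 aTg big_setU1 //= [X in _ <= X](big_setD1 g gT) /= lerD2r; apply.
by move: T_size; rewrite (cardsD1 g T) gT.
Qed.

End BestSet.

Section BestCoverage.
Variables (R : realFieldType) (V E : finType) (C : V -> {set E}) (q : E -> R).
Hypothesis q_ge0 : forall e, 0 <= q e.

Lemma add_uncovered_gain (S : {set V}) i a : a \notin CS C S -> a \in C i ->
  q a + \sum_(e in CS C S) q e <= \sum_(e in CS C (i |: S)) q e.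
Proof.
move=> aS aCi; rewrite -big_setU1 //=; apply: sum_subset_le q_ge0 _; rewrite subUset sub1set.
by rewrite CS_subset ?subsetUr // andbT; apply/CSP; exists i; rewrite ?setU11.
Qed.

Lemma sum_CS_delete (S : {set V}) :
  (#|S|.-1)%:R * \sum_(e in CS C S) q e <= \sum_(j in S) \sum_(e in CS C (S :\ j)) q e.
Proof.
rewrite -sum_mul_indicator mulr_sumr.
under [X in _ <= X]eq_bigr do rewrite -sum_mul_indicator.
rewrite [X in _ <= X]exchange_big /=; apply: ler_sum => e _.
rewrite -mulr_sumr mulrCA ler_wpM2l // -natr_sum -natrM ler_nat.
have [/CSP[k Sk eCk]|] := boolP (e \in CS C S); last by rewrite muln0.
rewrite muln1 (big_setD1 k Sk) /= (cardsD1 k S) Sk add1n /= -sum1_card.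
apply: leq_trans (leq_addl _ _); apply: leq_sum => j; rewrite !inE => /andP[jk Sj].
suff -> : e \in CS C (S :\ j) by [].
by apply/CSP; exists k; rewrite // !inE eq_sym jk.
Qed.

(* Dropping any one of the [b] elements of [S] in favour of [i] cannot pay off,
   and the [b] possible swaps together recover [S]'s coverage [b - 1] times. *)
Lemma best_cover_ge b (S : {set V}) i a : (0 < b)%N -> (#|S| <= b)%N ->
  (forall Y : {set V}, (#|Y| <= b)%N -> \sum_(e in CS C Y) q e <= \sum_(e in CS C S) q e) ->
  a \notin CS C S -> a \in C i -> b%:R * q a <= \sum_(e in CS C S) q e.
Proof.
move=> b_gt0 Sb S_best aS aCi; set h := \sum_(e in CS C S) q e.
have h_ge0 : 0 <= h by apply: sumr_ge0.
have iS : i \notin S by apply: contra aS => Si; apply/CSP; exists i.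
have [Slt|Sge] := ltnP #|S| b.
  have := le_trans (add_uncovered_gain aS aCi) (S_best _ _ : _ <= h).
  rewrite cardsU1 iS add1n => /(_ Slt); rewrite gerDr => qa_le0.
  by apply: le_trans h_ge0; rewrite mulr_ge0_le0 ?ler0n.
have Sb_eq : #|S| = b by apply/eqP; rewrite eqn_leq Sb.
have swap_le j : j \in S -> q a + \sum_(e in CS C (S :\ j)) q e <= h.
  move=> Sj; apply: le_trans (add_uncovered_gain _ aCi) (S_best _ _).
    by apply: contra aS; apply/subsetP/CS_subset/subsetDl.
  by rewrite cardsU1 !inE (negPf iS) andbF add1n (cardsD1 j S) Sj in Sb *.
have : (b.-1)%:R * h <= b%:R * (h - q a).
  rewrite -Sb_eq; apply: le_trans (sum_CS_delete S) _.
  rewrite -[#|S|]sum1_card natr_sum mulr_suml; apply: ler_sum => j Sj.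
  by rewrite mulr1n mul1r lerBrDl; apply: swap_le.
have -> : b%:R = (b.-1)%:R + 1 :> R by rewrite natr1 prednK.
lra.
Qed.

End BestCoverage.

Section NashSmallAttack.
Variables (R : realFieldType) (V E : finType) (C : V -> {set E}) (b1 b2 : nat).
Hypothesis b1_gt0 : (0 < b1)%N.
Hypothesis coverable : forall e : E, exists i : V, e \in C i.
Hypothesis no_small_cover : forall S : {set V}, (#|S| <= b1)%N -> ~~ coverb C S.

(* If the attacker plays a set [T0] of fewer than [b2] targets, all targets
   outside [T0] are surely detected; a target [a] missed by some defence in the
   support must then be attacked surely, and [best_cover_ge] makes the
   defender's payoff at least [b1]. *)
Lemma Nash_small_attack_U1_ge (s1 : {set V} -> R) s2 T0 :
  Nash C b1 b2 s1 s2 -> s2 T0 != 0 -> (#|T0| < b2)%N -> b1%:R <= U1 C s1 s2.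
Proof.
move=> N s2T0 T0b; case: (N) => ms1 ms2 _ _.
set p := cover_prob C s1.
have attack_best T : s2 T != 0 -> forall Y : {set E}, (#|Y| <= b2)%N ->
    \sum_(e in Y) (1 - p e) <= \sum_(e in T) (1 - p e).
  by move=> s2T Y Yb; rewrite -!pure_U2_E; apply: Nash_attack_best N s2T Yb.
have p_out e : e \notin T0 -> p e = 1.
  move=> eT0; apply/le_anti; rewrite (cover_prob_le1 C e ms1) /=.
  by rewrite -subr_le0 (best_set_add (attack_best _ s2T0) eT0 T0b).
have [S0 s1S0] := mixed_support_exists ms1.
have S0b := mixed_supp ms1 s1S0.
have [a aS0] : exists a, a \notin CS C S0.
  apply/existsP; move: (no_small_cover S0b); apply: contraR => /existsPn allCov.
  by apply/eqP/setP => e; rewrite inE; apply/negbNE.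
have pa_lt1 : p a < 1 := cover_prob_lt1 ms1 s1S0 aS0.
have a_in T : s2 T != 0 -> a \in T.
  move=> s2T; apply: contraT => aT.
  have Tb := mixed_supp ms2 s2T.
  have wa_gt0 : 0 < 1 - p a by rewrite subr_gt0.
  have T_ge : (b2 <= #|T|)%N.
    rewrite leqNgt; apply: contraTN wa_gt0 => /(best_set_add (attack_best _ s2T) aT).
    by rewrite leNgt.
  have /subsetPn[g gT gT0] : ~~ (T \subset T0).
    by apply: contraTN T0b => /subset_leq_card T_T0; rewrite -leqNgt (leq_trans T_ge).
  have := best_set_swap Tb (attack_best _ s2T) aT gT.
  by rewrite (p_out g gT0) subrr leNgt wa_gt0.
have qa : attack_prob s2 a = 1.
  rewrite -(mixed_sum1 ms2); apply: eq_bigr => T _.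
  by have [->|/a_in ->] := eqVneq (s2 T) 0; rewrite ?mul0r ?mulr1.
have [i aCi] := coverable a.
have := best_cover_ge (fun e => attack_prob_ge0 e ms2) b1_gt0 S0b
  (fun Y Yb => Nash_defence_best N s1S0 Yb) aS0 aCi.
rewrite qa mulr1 => b1_le; apply: le_trans b1_le _.
rewrite U1_defence; apply: (mixed_expect_ge ms1) => S s1S.
exact: Nash_defence_best N s1S S0b.
Qed.

End NashSmallAttack.

Section CyclicStrategies.
Variables (R : realFieldType) (A : finType).

Lemma cyc_expect (s : seq A) b (f : {set A} -> R) :
  \sum_X cyc R s b X * f X = (\sum_(k < size s) f (window s b k)) / (size s)%:R.
Proof.
rewrite /cyc mulr_suml; under eq_bigr do rewrite natr_sum !mulr_suml.
rewrite exchange_big; apply: eq_bigr => k _.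
rewrite (bigD1 (window s b k)) //= eqxx big1 ?addr0 => [|X /negPf ->]; last by rewrite !mul0r.
by rewrite mul1r mulrC.
Qed.

Lemma mixed_cyc (s : seq A) b : (0 < size s)%N -> mixed b (cyc R s b).
Proof.
move=> s_gt0; split => [X||X].
- by rewrite /cyc divr_ge0.
- under eq_bigr do rewrite -[cyc _ _ _ _]mulr1.
  by rewrite cyc_expect sumr_const card_ord -mulr_natr mul1r divff ?pnatr_eq0 -?lt0n.
- rewrite /cyc mulf_eq0 negb_or pnatr_eq0 => /andP[+ _].
  apply: contraNT; rewrite -ltnNge => Xb; apply/eqP/big1 => k _.
  by apply/eqP; rewrite eqb0; apply: contraTneq Xb => ->; rewrite -leqNgt card_window_le.
Qed.

End CyclicStrategies.

Lemma mulr_div_maxn_le (R : realFieldType) (x b1 b2 m : nat) : (x <= b1)%N -> (x <= m)%N ->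
  x%:R * (b2%:R / m%:R) <= (b1 * b2)%:R / (maxn b1 m)%:R :> R.
Proof.
move=> xb1 xm; have [m0|m_gt0] := posnP m.
  by move: xm; rewrite m0 leqn0 => /eqP->; rewrite mul0r divr_ge0.
have [b1m|mb1] := leqP b1 m; rewrite natrM.
  by rewrite mulrA; apply: ler_wpM2r; rewrite ?invr_ge0 // ler_wpM2r // ler_nat.
have m_neq0 : m%:R != 0 :> R by rewrite pnatr_eq0 -lt0n.
have b1_neq0 : b1%:R != 0 :> R by rewrite pnatr_eq0 -lt0n (leq_ltn_trans _ mb1).
rewrite mulrAC mulfV // mul1r; apply: (@le_trans _ _ (m%:R * (b2%:R / m%:R))).
- by apply: ler_wpM2r; rewrite ?divr_ge0 // ler_nat.
- by rewrite mulrCA mulfV // mulr1.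
Qed.

Section CyclicMarginals.
Variables (R : realFieldType) (V E : finType) (C : V -> {set E}).

Lemma cover_prob_cyc (sS : seq V) b e :
  cover_prob C (cyc R sS b) e =
  (\sum_(k < size sS) (e \in CS C (window sS b k)))%:R / (size sS)%:R.
Proof. by rewrite /cover_prob cyc_expect natr_sum. Qed.

Lemma cover_prob_cyc_ge (sS : seq V) b e : uniq sS -> is_cover C [set x in sS] ->
  (b <= size sS)%N -> b%:R / (size sS)%:R <= cover_prob C (cyc R sS b) e.
Proof.
move=> sS_uniq sS_cover bs; rewrite cover_prob_cyc ler_wpM2r ?invr_ge0 // ler_nat.
have /CSP[i] : e \in CS C [set x in sS] by rewrite sS_cover inE.
rewrite inE => sSi eCi; rewrite -{1}(count_window sS_uniq sSi bs); apply: leq_sum => k _.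
by case: (boolP (i \in _)) => // iw; rewrite (_ : e \in _) //; apply/CSP; exists i.
Qed.

Lemma cover_prob_cyc_private (sS : seq V) b e i : uniq sS -> i \in sS -> e \in C i ->
  (forall j, j \in sS -> e \in C j -> j = i) -> (b <= size sS)%N ->
  cover_prob C (cyc R sS b) e = b%:R / (size sS)%:R.
Proof.
move=> sS_uniq sSi eCi priv bs; rewrite cover_prob_cyc -[in RHS](count_window sS_uniq sSi bs).
congr (_%:R / _); apply: eq_bigr => k _; congr nat_of_bool; apply/CSP/idP => [[j jw eCj]|iw].
  have := subsetP (window_sub sS b k) j jw; rewrite inE => sSj.
  by rewrite -(priv j sSj eCj).
by exists i.
Qed.

Lemma attack_prob_cyc (tT : seq E) b e : uniq tT -> (b <= size tT)%N ->
  attack_prob (cyc R tT b) e = (e \in tT)%:R * b%:R / (size tT)%:R.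
Proof.
move=> tT_uniq bs; rewrite /attack_prob cyc_expect -natr_sum -natrM; congr (_%:R / _).
case: (boolP (e \in tT)) => eT /=; first by rewrite mul1n count_window.
rewrite mul0n big1 // => k _; apply/eqP; rewrite eqb0.
by apply: contra eT => /(subsetP (window_sub tT b k)); rewrite inE.
Qed.

Lemma expected_size_cyc (tT : seq E) b : uniq tT -> (b <= size tT)%N -> (0 < size tT)%N ->
  expected_size (cyc R tT b) = b%:R.
Proof.
move=> tT_uniq bs tT_gt0; rewrite /expected_size cyc_expect.
under eq_bigr do rewrite card_window //.
by rewrite sumr_const card_ord -[_ *+ size tT]mulr_natr mulfK // pnatr_eq0 -lt0n.
Qed.

Lemma pure_U1_cyc_le (tT : seq E) b1 b2 (S : {set V}) :
  uniq tT -> is_packing C [set x in tT] -> (b2 <= size tT)%N ->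
  (#|S| <= b1)%N -> pure_U1 C (cyc R tT b2) S <= (b1 * b2)%:R / (maxn b1 (size tT))%:R.
Proof.
move=> tT_uniq tT_packing bs Sb.
have -> : pure_U1 C (cyc R tT b2) S = #|CS C S :&: [set x in tT]|%:R * (b2%:R / (size tT)%:R).
  rewrite /pure_U1; under eq_bigr do rewrite attack_prob_cyc // -mulrA.
  by rewrite -mulr_suml setIC natr_card_setI; congr (_ * _); apply: eq_bigr => e _; rewrite inE.
apply: mulr_div_maxn_le; first exact: leq_trans (card_CS_packing S tT_packing) Sb.
by rewrite -(card_uniqP tT_uniq) -[#|tT|]cardsE subset_leq_card ?subsetIr.
Qed.

End CyclicMarginals.

Lemma dist_le_interval (R : realFieldType) (x y a c : R) :
  a <= x <= c -> a <= y <= c -> `|x - y| <= c - a.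
Proof. by move=> /andP[ax xc] /andP[ay yc]; rewrite ler_norml; apply/andP; split; lra. Qed.

Section CyclicProfile.
Variables (R : realFieldType) (V E : finType) (C : V -> {set E}) (b1 b2 : nat).
Variables (sS : seq V) (tT : seq E).
Hypothesis coverable : forall e : E, exists i : V, e \in C i.
Hypotheses (b1_gt0 : (0 < b1)%N) (b2_gt0 : (0 < b2)%N).
Hypotheses (b1_lt_n : (b1 < nstar C)%N) (b2_lt_m : (b2 < mstar C)%N).
Hypotheses (sS_uniq : uniq sS) (sS_cover : is_cover C [set x in sS]).
Hypotheses (tT_uniq : uniq tT) (tT_packing : is_packing C [set x in tT]).
Hypotheses (sS_size : size sS = nstar C) (tT_size : size tT = mstar C).

Local Notation n := (nstar C).
Local Notation m := (mstar C).
Local Notation s1c := (cyc R sS b1).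
Local Notation s2c := (cyc R tT b2).
Local Notation r := (b1%:R / n%:R : R).
Local Notation hi := ((b1 * b2)%:R / (maxn b1 m)%:R : R).
Local Notation lo := ((b1 * b2)%:R / n%:R : R).

Lemma m_le_n : (m <= n)%N.
Proof.
rewrite -tT_size -sS_size -(card_uniqP tT_uniq) -(card_uniqP sS_uniq).
rewrite -[#|tT|]cardsE -[#|sS|]cardsE.
exact: card_packing_le_cover tT_packing sS_cover.
Qed.

Lemma lo_E : lo = r * b2%:R.
Proof. by rewrite natrM mulrAC. Qed.

Lemma r_le1 : r <= 1.
Proof. by rewrite ler_pdivrMr ?ltr0n ?mul1r ?ler_nat ?(ltnW b1_lt_n) // (ltn_trans b1_gt0). Qed.

Lemma mixed_s1c : mixed b1 s1c.
Proof. by apply: mixed_cyc; rewrite sS_size (ltn_trans b1_gt0). Qed.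

Lemma mixed_s2c : mixed b2 s2c.
Proof. by apply: mixed_cyc; rewrite tT_size (leq_ltn_trans _ b2_lt_m). Qed.

Lemma U1_cyc_attack_le (s1 : {set V} -> R) : mixed b1 s1 -> U1 C s1 s2c <= hi.
Proof.
move=> ms1; rewrite U1_defence; apply: (mixed_expect_le ms1) => S s1S.
by rewrite -tT_size pure_U1_cyc_le ?tT_size ?(ltnW b2_lt_m) // (mixed_supp ms1 s1S).
Qed.

Lemma U1_cyc_defence_ge (s2 : {set E} -> R) : mixed b2 s2 -> r * expected_size s2 <= U1 C s1c s2.
Proof.
move=> ms2; rewrite U1_attack /expected_size mulr_sumr; apply: ler_sum => T _.
case: ms2 => s2_ge0 _ _; rewrite mulrCA ler_wpM2l // (card_sumR R T) mulr_sumr.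
by apply: ler_sum => e _; rewrite mulr1 -sS_size cover_prob_cyc_ge ?sS_size ?(ltnW b1_lt_n).
Qed.

Lemma U2_le_of_U1_ge (s1 : {set V} -> R) s2 : mixed b1 s1 -> mixed b2 s2 ->
  r * expected_size s2 <= U1 C s1 s2 -> U2 C s1 s2 <= b2%:R - lo.
Proof.
move=> ms1 ms2 U1_ge; rewrite U2_E ?(mixed_sum1 ms1) // lo_E.
have one_sub_r_ge0 : 0 <= 1 - r by rewrite subr_ge0 r_le1.
have Q_le : 0 <= b2%:R - expected_size s2 by rewrite subr_ge0 (expected_size_le ms2).
have := mulr_ge0 one_sub_r_ge0 Q_le; lra.
Qed.

Lemma U2_cyc_defence_le (s2 : {set E} -> R) : mixed b2 s2 -> U2 C s1c s2 <= b2%:R - lo.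
Proof. by move=> ms2; apply: U2_le_of_U1_ge mixed_s1c ms2 (U1_cyc_defence_ge ms2). Qed.

Lemma U2_cyc_attack_ge (s1 : {set V} -> R) : mixed b1 s1 -> b2%:R - hi <= U2 C s1 s2c.
Proof.
move=> ms1; rewrite U2_E ?(mixed_sum1 ms1) // expected_size_cyc ?tT_size ?(ltnW b2_lt_m) //.
  by have := U1_cyc_attack_le ms1; lra.
exact: leq_ltn_trans b2_lt_m.
Qed.

Lemma Nash_U1_ge (s1 : {set V} -> R) s2 : Nash C b1 b2 s1 s2 -> lo <= U1 C s1 s2.
Proof.
move=> N; case: (N) => ms1 ms2 opt1 _.
have [/existsP[T0 /andP[s2T0 T0b]]|/existsPn full] :=
  boolP [exists T, (s2 T != 0) && (#|T| < b2)%N].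
  have no_small_cover (S : {set V}) : (#|S| <= b1)%N -> ~~ coverb C S.
    move=> Sb; apply: contraTN b1_lt_n => /(nstar_le_cover coverable).
    by rewrite -leqNgt => /leq_trans->.
  apply: le_trans (Nash_small_attack_U1_ge b1_gt0 coverable no_small_cover N s2T0 T0b).
  rewrite natrM -mulrA ler_piMr ?ler0n // ler_pdivrMr ?mul1r ?ler_nat ?ltr0n.
    exact: leq_trans (ltnW b2_lt_m) m_le_n.
  exact: ltn_trans b1_lt_n.
have Q_ge : b2%:R <= expected_size s2.
  apply: (mixed_expect_ge ms2) => T s2T; rewrite ler_nat leqNgt.
  by have := full T; rewrite s2T.
rewrite -[U1 C s1 s2]addr0; apply: le_trans (opt1 _ mixed_s1c).
by apply: le_trans (U1_cyc_defence_ge ms2); rewrite lo_E ler_wpM2l ?divr_ge0.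
Qed.

Lemma cyc_payoff_bounds :
  [/\ lo <= U1 C s1c s2c, U1 C s1c s2c <= hi,
      b2%:R - hi <= U2 C s1c s2c & U2 C s1c s2c <= b2%:R - lo].
Proof.
split; [|exact: U1_cyc_attack_le mixed_s1c|exact: U2_cyc_attack_ge mixed_s1c
        |exact: U2_cyc_defence_le mixed_s2c].
have := U1_cyc_defence_ge mixed_s2c.
by rewrite expected_size_cyc ?tT_size ?(ltnW b2_lt_m) ?(leq_ltn_trans _ b2_lt_m) // -lo_E.
Qed.

Lemma Nash_payoff_bounds (s1 : {set V} -> R) s2 : Nash C b1 b2 s1 s2 ->
  [/\ lo <= U1 C s1 s2, U1 C s1 s2 <= hi,
      b2%:R - hi <= U2 C s1 s2 & U2 C s1 s2 <= b2%:R - lo].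
Proof.
move=> N; case: (N) => ms1 ms2 opt1 opt2.
have U2_ge : b2%:R - hi <= U2 C s1 s2.
  apply: le_trans (U2_cyc_attack_ge ms1) _.
  by rewrite -[X in _ <= X]addr0; apply: opt2 mixed_s2c.
have U1_ge := Nash_U1_ge N.
split => //.
- move: U2_ge; rewrite U2_E ?(mixed_sum1 ms1) //.
  by have := expected_size_le ms2; lra.
- apply: U2_le_of_U1_ge => //; apply: le_trans (U1_cyc_defence_ge ms2) _.
  by rewrite -[X in _ <= X]addr0; apply: opt1 mixed_s1c.
Qed.

Lemma cyc_epsNash : epsNash C b1 b2 (hi - lo) s1c s2c.
Proof.
have [lo_U1 _ hi_U2 _] := cyc_payoff_bounds.
split; [exact: mixed_s1c|exact: mixed_s2c| |].
- by move=> s1 /U1_cyc_attack_le; lra.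
- by move=> s2 /U2_cyc_defence_le; lra.
Qed.

Lemma Nash_payoffs_close (s1 : {set V} -> R) s2 : Nash C b1 b2 s1 s2 ->
  `|U1 C s1c s2c - U1 C s1 s2| <= hi - lo /\ `|U2 C s1c s2c - U2 C s1 s2| <= hi - lo.
Proof.
move=> /Nash_payoff_bounds[lo_U1 U1_hi hi_U2 U2_lo].
have [lo_U1c U1c_hi hi_U2c U2c_lo] := cyc_payoff_bounds.
split; first by apply: dist_le_interval; apply/andP.
rewrite (_ : hi - lo = (b2%:R - lo) - (b2%:R - hi)); last by ring.
by apply: dist_le_interval; apply/andP.
Qed.

Lemma rate_cyc_ge (s2 : {set E} -> R) : mixed b2 s2 -> nonempty_support s2 -> r <= rate C s1c s2.
Proof.
move=> ms2 s2_ne; rewrite rate_detected; apply: (mixed_expect_ge ms2) => T s2T.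
have T_gt0 : (0 < #|T|)%N by rewrite card_gt0 s2_ne.
rewrite ler_pdivlMr ?ltr0n // (card_sumR R T) mulr_sumr; apply: ler_sum => e _.
by rewrite mulr1 -sS_size cover_prob_cyc_ge ?sS_size ?(ltnW b1_lt_n).
Qed.

Lemma rate_cyc_attained :
  exists s2 : {set E} -> R, [/\ mixed b2 s2, nonempty_support s2 & rate C s1c s2 = r].
Proof.
have [i0 sSi0] : exists i0, i0 \in sS.
  by case: sS sS_size b1_lt_n => [<-|i0 s _ _]; [rewrite ltn0|exists i0; rewrite inE eqxx].
have card_sS : #|[set x in sS]| = n by rewrite cardsE (card_uniqP sS_uniq).
have sSi0' : i0 \in [set x in sS] by rewrite inE.
have [e0 e0C priv] := min_cover_private coverable sS_cover card_sS sSi0'.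
exists (pure_strategy R [set e0]); split.
- by apply: mixed_pure; rewrite cards1.
- by move=> T; rewrite /pure_strategy pnatr_eq0 eqb0 negbK => /eqP->; rewrite -card_gt0 cards1.
rewrite rate_detected expect_pure cards1 divr1 /detected big_set1 -sS_size.
apply: (cover_prob_cyc_private R sS_uniq sSi0 e0C); last by rewrite sS_size ltnW.
by move=> j sSj; apply: priv; rewrite inE.
Qed.

Lemma Nash_rate_le (s1 : {set V} -> R) s2 : Nash C b1 b2 s1 s2 ->
  rate C s1 s2 <= b1%:R / (maxn b1 m)%:R.
Proof.
move=> N; have [_ _ hi_U2 _] := Nash_payoff_bounds N; case: (N) => ms1 ms2 _ _.
set rho : R := b1%:R / (maxn b1 m)%:R.
have hi_E : hi = rho * b2%:R by rewrite natrM mulrAC.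
have one_sub_rho_ge0 : 1 - rho >= 0.
  rewrite subr_ge0 ler_pdivrMr ?mul1r ?ler_nat ?leq_maxl // ltr0n.
  exact: leq_trans b1_gt0 (leq_maxl _ _).
rewrite rate_detected; apply: (mixed_expect_le ms2) => T s2T.
have Tb : (#|T| <= b2)%N := mixed_supp ms2 s2T.
have U2_le : U2 C s1 s2 <= pure_U2 C s1 T.
  rewrite U2_attack ?(mixed_sum1 ms1) //; apply: (mixed_expect_le ms2) => X s2X.
  exact: Nash_attack_best N s2T (mixed_supp ms2 s2X).
have [T0|T_gt0] := posnP #|T|; first by rewrite T0 invr0 mulr0 divr_ge0.
rewrite ler_pdivrMr ?ltr0n //.
have T_le : 0 <= b2%:R - #|T|%:R :> R by rewrite subr_ge0 ler_nat.
have := mulr_ge0 one_sub_rho_ge0 T_le; move: U2_le hi_U2; rewrite /pure_U2 hi_E; lra.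
Qed.

Lemma Nash_rate_scaled_le (s1 : {set V} -> R) s2 : Nash C b1 b2 s1 s2 ->
  (maxn b1 m)%:R / n%:R * rate C s1 s2 <= r.
Proof.
move=> N; have maxn_neq0 : (maxn b1 m)%:R != 0 :> R.
  by rewrite pnatr_eq0 -lt0n (leq_trans b1_gt0) ?leq_maxl.
have -> : r = (maxn b1 m)%:R / n%:R * (b1%:R / (maxn b1 m)%:R).
  by field; rewrite maxn_neq0 pnatr_eq0 -lt0n (ltn_trans b1_gt0).
by rewrite ler_wpM2l ?divr_ge0 // Nash_rate_le.
Qed.

End CyclicProfile.

Theorem theorem2 (R : realFieldType) (V E : finType) (C : V -> {set E}) (b1 b2 : nat) :
  (0 < #|V|)%N -> (0 < #|E|)%N -> (forall e : E, exists i : V, e \in C i) ->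
  (0 < b1)%N -> (0 < b2)%N -> (b1 < nstar C)%N -> (b2 < mstar C)%N ->
  forall (sS : seq V) (tT : seq E),
    uniq sS -> is_cover C [set x in sS] -> size sS = nstar C ->
    uniq tT -> is_packing C [set x in tT] -> size tT = mstar C ->
  let eps : R := (b1 * b2)%:R * ((maxn b1 (mstar C))%:R^-1 - (nstar C)%:R^-1) in
  let s1c : {set V} -> R := cyc R sS b1 in
  let s2c : {set E} -> R := cyc R tT b2 in
  [/\ (* (i.a) *) epsNash C b1 b2 eps s1c s2c,
      (* (i.b) *)
      (forall (s1 : {set V} -> R) (s2 : {set E} -> R), Nash C b1 b2 s1 s2 ->
         `|U1 C s1c s2c - U1 C s1 s2| <= eps /\ `|U2 C s1c s2c - U2 C s1 s2| <= eps),
      (* (ii) minimum of the detection rate against the cyclic defence *)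
      (forall s2 : {set E} -> R, mixed b2 s2 -> nonempty_support s2 ->
         b1%:R / (nstar C)%:R <= rate C s1c s2) /\
      (exists s2 : {set E} -> R, [/\ mixed b2 s2, nonempty_support s2 &
         rate C s1c s2 = b1%:R / (nstar C)%:R])
    & (* (ii) comparison with Nash equilibria *)
      (forall (s1 : {set V} -> R) (s2 : {set E} -> R), Nash C b1 b2 s1 s2 ->
         (maxn b1 (mstar C))%:R / (nstar C)%:R * rate C s1 s2 <= b1%:R / (nstar C)%:R)].
Proof.
move=> _ _ coverable b1_gt0 b2_gt0 b1_lt_n b2_lt_m sS tT sS_uniq sS_cover sS_size
  tT_uniq tT_packing tT_size eps s1c s2c.
rewrite /eps mulrBr; split.
- exact: cyc_epsNash.
- by move=> s1 s2; apply: Nash_payoffs_close.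
- by split; [move=> s2; apply: rate_cyc_ge | apply: rate_cyc_attained].
- by move=> s1 s2; apply: (Nash_rate_scaled_le (sS := sS) (tT := tT)).
Qed.
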